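(* Let $C\subseteq\mathbb{R}^n$ be a full-dimensional closed convex cone with lineality space $L$, and let $S\subseteq\mathbb{R}^n$ be closed. Then $C$ is maximal $S$-free if and only if $C\cap L^\perp$ is maximal $\operatorname{cl}(\operatorname{proj}_{L^\perp}S)$-free (as a subset of the space $L^\perp$).
   Context: A convex set $C$ is $S$-free if $\operatorname{int}(C)\cap S=\emptyset$ and maximal $S$-free if it is $S$-free and no $S$-free convex set strictly contains it; for subsets of the subspace $L^\perp$, interiors are taken relative to $L^\perp$ and competing convex sets are subsets of $L^\perp$. $\operatorname{proj}_{L^\perp}$ is the orthogonal projection onto $L^\perp$ and $\operatorname{cl}$ denotes closure. *)

From HB Require Import structures.
From mathcomp Require Import all_boot all_order all_algebra.
From mathcomp Require Import all_classical all_reals all_analysis.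
Import numFieldTopology.Exports numFieldNormedType.Exports.
Set Implicit Arguments. Unset Strict Implicit. Unset Printing Implicit Defensive.
Import Order.TTheory GRing.Theory Num.Theory.
Local Open Scope classical_set_scope.
Local Open Scope ring_scope.

(* Ambient space R^n is modelled as row vectors 'rV[R]_n, with its
   canonical (normed) topology from MathComp-Analysis. *)

Section Defs.
Variables (R : realType) (n : nat).
Local Notation V := 'rV[R]_n.

Definition dotv (u v : V) : R := \sum_(i < n) u ord0 i * v ord0 i.

Definition convex_set_rV (A : set V) : Prop :=
  forall x y (t : R), A x -> A y -> 0 <= t <= 1 -> A (t *: x + (1 - t) *: y).

Definition cone_rV (A : set V) : Prop :=
  forall x (t : R), A x -> 0 <= t -> A (t *: x).

Definition lineality (C : set V) : set V :=
  [set d | forall x (t : R), C x -> C (x + t *: d)].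

Definition perp (L : set V) : set V :=
  [set y | forall x, L x -> dotv x y = 0].

Definition orth_proj (W : set V) (x : V) : V :=
  xget 0 [set y | W y /\ forall z, W z -> dotv (x - y) z = 0].

Definition S_free (S C : set V) : Prop :=
  convex_set_rV C /\ interior C `&` S = set0.

Definition maximal_S_free (S C : set V) : Prop :=
  S_free S C /\
  forall K, S_free S K -> C `<=` K -> K = C.

Definition rel_interior (W A : set V) : set V :=
  [set x | W x /\ exists N, nbhs x N /\ N `&` W `<=` A].

Definition S_free_in (W S C : set V) : Prop :=
  C `<=` W /\ convex_set_rV C /\ rel_interior W C `&` S = set0.

Definition maximal_S_free_in (W S C : set V) : Prop :=
  S_free_in W S C /\
  forall K, S_free_in W S K -> C `<=` K -> K = C.

End Defs.

From HB Require Import structures.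
From mathcomp Require Import all_boot all_order all_algebra.
From mathcomp Require Import all_classical all_reals all_analysis.
Import numFieldTopology.Exports numFieldNormedType.Exports.
Import Order.TTheory GRing.Theory Num.Theory.
Local Open Scope classical_set_scope.
Local Open Scope ring_scope.

(* The lineality space L of C acts on C by translations, so C is the cylinder
   P⁻¹(C ∩ L^⊥) over its section, P being the orthogonal projection onto L^⊥.
   Pulling back along P sends S'-free subsets K' of L^⊥, S' = cl P(S), to
   S-free sets P⁻¹(K'); conversely, an S-free K gives the S'-free set
   {y ∈ L^⊥ | y + L ⊆ K}, the closure in S' being harmless because P is
   continuous.  Both constructions are monotone and exchange C and C ∩ L^⊥,
   which transfers maximality both ways; going back up uses that a convex
   K ⊇ C contains x/2 + l = (x + 2l)/2 for x ∈ K and l ∈ L, and that C is a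
   cone. *)

Section GramRank.
Variable R : realFieldType.

Lemma mulmx_tr_eq0 p q (B : 'M[R]_(p, q)) : B *m B^T = 0 -> B = 0.
Proof.
move=> BBT0; apply/matrixP => i j; rewrite mxE.
have := congr1 (fun M : 'M[R]_p => M i i) BBT0; rewrite !mxE => /eqP.
rewrite psumr_eq0 => [/allP /(_ j) |k _]; last by rewrite mxE -expr2 sqr_ge0.
by rewrite mem_index_enum mxE mulf_eq0 orbb => /(_ isT) /eqP.
Qed.

Lemma mxrank_mul_tr m n (A : 'M[R]_(m, n)) : \rank (A *m A^T) = \rank A.
Proof.
have kerAAT : (kermx (A *m A^T) <= kermx A)%MS.
  apply/sub_kermxP; apply: mulmx_tr_eq0.
  by rewrite trmx_mul mulmxA -(mulmxA _ A) mulmx_ker mul0mx.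
have kerA : (kermx A <= kermx (A *m A^T))%MS.
  by apply/sub_kermxP; rewrite mulmxA mulmx_ker mul0mx.
have := anti_leq (introT andP (conj (mxrankS kerAAT) (mxrankS kerA))).
by rewrite !mxrank_ker => /(congr1 (subn m)); rewrite !subKn // rank_leq_row.
Qed.

End GramRank.

Section InnerProduct.
Context {R : realType} {n : nat}.
Local Notation V := 'rV[R]_n.

Lemma dotvE (u v : V) : dotv u v = (u *m v^T) 0 0.
Proof. by rewrite /dotv !mxE; apply: eq_bigr => j _; rewrite mxE. Qed.

Lemma dotvC (u v : V) : dotv u v = dotv v u.
Proof. by apply: eq_bigr => j _; rewrite mulrC. Qed.

Lemma dotvDl (u u' v : V) : dotv (u + u') v = dotv u v + dotv u' v.
Proof.
by rewrite /dotv -big_split; apply: eq_bigr => j _; rewrite mxE mulrDl.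
Qed.

Lemma dotvZl a (u v : V) : dotv (a *: u) v = a * dotv u v.
Proof.
by rewrite /dotv mulr_sumr; apply: eq_bigr => j _; rewrite mxE mulrA.
Qed.

Lemma dotvBl (u u' v : V) : dotv (u - u') v = dotv u v - dotv u' v.
Proof. by rewrite dotvDl -scaleN1r dotvZl mulN1r. Qed.

Lemma dotvDr (u v v' : V) : dotv u (v + v') = dotv u v + dotv u v'.
Proof. by rewrite dotvC dotvDl !(dotvC u). Qed.

Lemma dotvZr a (u v : V) : dotv u (a *: v) = a * dotv u v.
Proof. by rewrite dotvC dotvZl dotvC. Qed.

Lemma dotv0r (u : V) : dotv u 0 = 0.
Proof. by have := dotvZr 0 u 0; rewrite scale0r mul0r. Qed.

Lemma dotvv_eq0 (v : V) : dotv v v = 0 -> v = 0.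
Proof.
rewrite dotvE => vv0; apply: mulmx_tr_eq0; apply/matrixP => i j.
by rewrite !ord1 vv0 mxE.
Qed.

Record subspace (L : set V) : Prop := Subspace {
  subspace0 : L 0;
  subspaceD : forall x y, L x -> L y -> L (x + y);
  subspaceZ : forall (a : R) x, L x -> L (a *: x) }.

Lemma subspaceB {L : set V} {x y : V} : subspace L -> L x -> L y -> L (x - y).
Proof.
move=> subL Lx Ly; rewrite -scaleN1r.
by apply: subspaceD => //; apply: subspaceZ.
Qed.

Lemma perp_subspace (L : set V) : subspace (perp L).
Proof.
split=> [x _ | x y Wx Wy z Lz | a x Wx z Lz]; first exact: dotv0r.
  by rewrite dotvDr Wx // Wy // addr0.
by rewrite dotvZr Wx // mulr0.
Qed.

Lemma lineality_subspace (C : set V) : subspace (lineality C).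
Proof.
split=> [x t Cx | d e Ld Le x t Cx | a d Ld x t Cx].
- by rewrite scaler0 addr0.
- by rewrite scalerDr addrA; apply: Le; apply: Ld.
- by rewrite scalerA; apply: Ld.
Qed.

End InnerProduct.

Arguments subspace0 {R n L}.
Arguments subspaceD {R n L}.
Arguments subspaceZ {R n L}.

Section OrthProj.
Context {R : realType} {n : nat} {L : set 'rV[R]_n}.
Hypothesis subL : subspace L.
Local Notation V := 'rV[R]_n.
Local Notation W := (perp L).
Local Notation P := (orth_proj W).

Lemma subspace_perp_eq0 v : L v -> W v -> v = 0.
Proof. by move=> Lv Wv; apply: dotvv_eq0; apply: Wv. Qed.

Lemma subspace_row_space :
  exists A : 'M[R]_n, forall w : V, L w <-> (w <= A)%MS.
Proof.
suff grow k (A : 'M[R]_n) : (forall w : V, (w <= A)%MS -> L w) ->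
    (n - \rank A <= k)%N ->
  exists B : 'M[R]_n, forall w : V, L w <-> (w <= B)%MS.
  apply: (grow n 0) => [w|]; last exact: leq_subr.
  by rewrite submx0 => /eqP ->; apply: subspace0.
(* Adjoin vectors of L outside the row space until none is left. *)
elim: k A => [|k IHk] A AL rkA.
  have fullA : row_full A.
    by rewrite /row_full eqn_leq rank_leq_col -subn_eq0 -leqn0.
  by exists A => w; split=> [_ | /AL //]; apply: submx_full.
have [spanA | /existsNP [v /not_implyP [Lv /negP vA]]] :=
  pselect (forall v, L v -> (v <= A)%MS).
  by exists A => w; split=> [/spanA | /AL].
have ltAv : (\rank A < \rank (A + v)%MS)%N.
  suff : (A < A + v)%MS by rewrite ltmxErank => /andP[].
  rewrite ltmxE addsmxSl /=; apply: contraNN vA.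
  exact: submx_trans (addsmxSr A v).
apply: (IHk (A + v)%MS).
  move=> w /sub_addsmxP [[u u']] /= ->; apply: (subspaceD subL).
    by apply: AL; apply: submxMl.
  by rewrite [u']mx11_scalar mul_scalar_mx; apply: subspaceZ.
rewrite -ltnS (leq_trans _ rkA) // ltn_sub2l //.
exact: leq_trans ltAv (rank_leq_col _).
Qed.

Lemma orthogonal_decomposition x : exists2 l, L l & W (x - l).
Proof.
have [A LA] := subspace_row_space.
(* l := u A where x A^T = u A A^T, solvable since A A^T and A^T have equal
   rank, hence the same row space. *)
have /submxP [u xAT] : (x *m A^T <= A *m A^T)%MS.
  apply: submx_trans (submxMl x A^T) _.
  have /leqifP := mxrank_leqif_sup (submxMl A A^T).
  by rewrite mxrank_mul_tr mxrank_tr ltnn; case: ifP.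
exists (u *m A); first by apply/LA; apply: submxMl.
move=> z /LA /submxP [z' ->].
have orthA : A *m (x - u *m A)^T = 0.
  by rewrite -[A in A *m _]trmxK -trmx_mul mulmxBl -mulmxA xAT subrr trmx0.
by rewrite dotvE -mulmxA orthA mulmx0 mxE.
Qed.

Lemma orth_projP x : W (P x) /\ L (x - P x).
Proof.
have [l Ll Wxl] := orthogonal_decomposition x.
have [|Wy orthy] := xgetPex 0 (P := [set y | W y /\
    forall z, W z -> dotv (x - y) z = 0]).
  exists (x - l); split=> // z Wz.
  by rewrite opprB addrCA subrr addr0; apply: Wz.
rewrite /orth_proj; set y := xget _ _ in Wy orthy *.
suff -> : y = x - l by rewrite opprB addrCA subrr addr0.
have Wd : W (x - l - y) by apply: (subspaceB (perp_subspace L)).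
apply/eqP; rewrite eq_sym -subr_eq0; apply/eqP/dotvv_eq0.
by rewrite {1}addrAC dotvBl orthy // (Wd l Ll) subrr.
Qed.

Lemma orth_proj_perp x : W (P x).
Proof. by case: (orth_projP x). Qed.

Lemma orth_proj_residual x : L (x - P x).
Proof. by case: (orth_projP x). Qed.

Lemma orth_proj_uniq x y : W y -> L (x - y) -> P x = y.
Proof.
move=> Wy Lxy; apply/eqP; rewrite -subr_eq0; apply/eqP.
apply: subspace_perp_eq0.
  have -> : P x - y = (x - y) - (x - P x).
    by rewrite opprB (addrC (x - y)) addrA subrK.
  exact: subspaceB subL Lxy (orth_proj_residual x).
exact: subspaceB (perp_subspace L) (orth_proj_perp x) Wy.
Qed.

Lemma orth_proj_id y : W y -> P y = y.
Proof.
by move=> Wy; apply: orth_proj_uniq; rewrite // subrr; apply: subspace0.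
Qed.

Lemma orth_proj_eq0 x : L x -> P x = 0.
Proof.
move=> Lx; apply: orth_proj_uniq; last by rewrite subr0.
exact: subspace0 (perp_subspace L).
Qed.

Lemma orth_projD x y : P (x + y) = P x + P y.
Proof.
apply: orth_proj_uniq.
  by apply: (subspaceD (perp_subspace L)); apply: orth_proj_perp.
rewrite opprD addrACA; apply: (subspaceD subL); exact: orth_proj_residual.
Qed.

Lemma orth_projZ a x : P (a *: x) = a *: P x.
Proof.
apply: orth_proj_uniq.
  by apply: (subspaceZ (perp_subspace L)); apply: orth_proj_perp.
by rewrite -scalerBr; apply: (subspaceZ subL); apply: orth_proj_residual.
Qed.

Lemma orth_proj_continuous : continuous P.
Proof.
have -> : P = (fun x : V => \sum_(j < n) x 0 j *: P 'e_j).
  apply: funext => x; rewrite {1}(row_sum_delta x).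
  rewrite (big_morph P orth_projD (orth_proj_eq0 _ (subspace0 subL))).
  by apply: eq_bigr => j _; rewrite orth_projZ.
apply: continuous_big; first exact: add_continuous.
by move=> j _ x; apply: continuousZr_tmp; apply: coord_continuous.
Qed.

Definition fibre_core (K : set V) : set V :=
  [set y | W y /\ forall l, L l -> K (y + l)].

Context {S : set V}.
Local Notation S' := (closure (P @` S)).

Lemma S_free_preimage {K' : set V} :
  S_free_in W S' K' -> S_free S (P @^-1` K').
Proof.
case=> _ [convK' freeK']; split.
  by move=> x y t Kx Ky t01 /=; rewrite orth_projD !orth_projZ; apply: convK'.
apply/seteqP; split => // s [intKs Ss].
suff: (rel_interior W K' `&` S') (P s) by rewrite freeK'.
split; last by apply: subset_closure; exists s.
split; first exact: orth_proj_perp.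
exists [set y | K' (P (y + (s - P s)))]; split.
  have intK : \forall z \near P s + (s - P s), K' (P z).
    by rewrite addrCA subrr addr0.
  exact: (nbhsDl _ _ _).1 intK.
move=> y [/= Ky Wy]; move: Ky.
rewrite orth_projD (orth_proj_eq0 _ (orth_proj_residual s)) addr0.
by rewrite orth_proj_id.
Qed.

Lemma S_free_fibre_core {K : set V} :
  S_free S K -> S_free_in W S' (fibre_core K).
Proof.
case=> convK freeK; split; first by move=> y [].
split.
  move=> y1 y2 t [W1 K1] [W2 K2] t01; split.
    by apply: (subspaceD (perp_subspace L));
      apply: (subspaceZ (perp_subspace L)).
  move=> l Ll.
  have -> : t *: y1 + (1 - t) *: y2 + l = t *: (y1 + l) + (1 - t) *: (y2 + l).
    by rewrite !scalerDr addrACA -scalerDl (addrC t) subrK scale1r.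
  by apply: convK => //; [apply: K1 | apply: K2].
apply/seteqP; split => // y [[_ [N [nN NWK]]] clSy].
have [_ [[s Ss <-] intNPs]] := clSy _ (nbhs_interior nN).
suff : (interior K `&` S) s by rewrite freeK.
split=> //; have : nbhs s (P @^-1` N) by exact: orth_proj_continuous intNPs.
apply: filterS => z /= Nz.
have [_ Kfibre] := NWK _ (conj Nz (orth_proj_perp z)).
by have := Kfibre _ (orth_proj_residual z); rewrite addrCA subrr addr0.
Qed.

End OrthProj.

Arguments fibre_core {R n} L K.

Section LinealityCylinder.
Variables (R : realType) (n : nat) (C S : set 'rV[R]_n).
Local Notation L := (lineality C).
Local Notation W := (perp L).
Local Notation P := (orth_proj W).
Local Notation S' := (closure (P @` S)).
Let subL := lineality_subspace C.

Lemma mem_orth_proj_lineality x : C (P x) <-> C x.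
Proof.
have Lx := orth_proj_residual subL x.
split=> Cx; first by have := Lx _ 1 Cx; rewrite scale1r addrCA subrr addr0.
by have := Lx _ (-1) Cx; rewrite scaleN1r opprB addrCA subrr addr0.
Qed.

Lemma preimage_orth_proj_lineality : P @^-1` (C `&` W) = C.
Proof.
apply/seteqP; split=> x /=; first by case=> /mem_orth_proj_lineality.
by move=> Cx; split; [apply/mem_orth_proj_lineality | apply: orth_proj_perp].
Qed.

Lemma fibre_core_lineality : fibre_core L C = C `&` W.
Proof.
apply/seteqP; split=> y.
  by case=> Wy CyL; split=> //; have := CyL 0 (subspace0 subL); rewrite addr0.
by case=> Cy Wy; split=> // l Ll; have := Ll y 1 Cy; rewrite scale1r.
Qed.

Lemma convex_lineality_half {K : set 'rV[R]_n} {x l : 'rV[R]_n} :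
  C 0 -> convex_set_rV K -> C `<=` K -> K x -> L l -> K (2^-1 *: x + l).
Proof.
move=> C0 convK CK Kx Ll.
have C2l : C (2 *: l) by have := Ll 0 2 C0; rewrite add0r.
have half01 : 0 <= (2^-1 : R) <= 1 by rewrite invr_ge0 ler0n invf_le1 ?ler1n.
have := convK _ _ _ Kx (CK _ C2l) half01.
rewrite scalerA mulrBl mul1r mulVf ?pnatr_eq0 //.
by rewrite (_ : 2 - 1 = 1 :> R) ?scale1r // -[2]/(1 + 1) addrK.
Qed.

Lemma maximal_S_free_perp_lineality :
  maximal_S_free S C -> maximal_S_free_in W S' (C `&` W).
Proof.
case=> freeC maxC; split.
  by rewrite -fibre_core_lineality; apply: S_free_fibre_core.
move=> K' freeK' CWK'.
have CK' : C `<=` P @^-1` K'.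
  move=> x Cx; apply: CWK'.
  by split; [apply/mem_orth_proj_lineality | apply: orth_proj_perp].
have PK'C := maxC _ (S_free_preimage subL freeK') CK'.
apply/seteqP; split=> // k K'k; have Wk := freeK'.1 _ K'k.
have : (P @^-1` K') k by rewrite /= orth_proj_id.
by rewrite PK'C.
Qed.

Lemma maximal_S_free_of_perp_lineality : cone_rV C -> C 0 ->
  maximal_S_free_in W S' (C `&` W) -> maximal_S_free S C.
Proof.
move=> coneC C0 [freeCW maxCW]; split.
  by have := S_free_preimage subL freeCW; rewrite preimage_orth_proj_lineality.
move=> K freeK CK; apply/seteqP; split=> // x Kx.
have CWK : C `&` W `<=` fibre_core L K.
  by rewrite -fibre_core_lineality => y [Wy Cy]; split=> // l /Cy /CK.
have coreK := maxCW _ (S_free_fibre_core subL freeK) CWK.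
have : fibre_core L K (P (2^-1 *: x)).
  split=> [|l Ll]; first exact: orth_proj_perp.
  have Ll' : L (P (2^-1 *: x) - 2^-1 *: x + l).
    apply: (subspaceD subL _ _ _ Ll); rewrite -opprB -scaleN1r.
    exact: subspaceZ subL _ _ (orth_proj_residual subL _).
  have := convex_lineality_half C0 freeK.1 CK Kx Ll'.
  by rewrite addrA addrCA subrr addr0.
rewrite coreK => -[/mem_orth_proj_lineality Cx2 _].
have := coneC _ _ Cx2 (ler0n R 2).
by rewrite scalerA mulfV ?pnatr_eq0 // scale1r.
Qed.

End LinealityCylinder.

Theorem theorem6 (R : realType) (n : nat) (C S : set 'rV[R]_n) :
  convex_set_rV C -> cone_rV C -> closed C -> interior C !=set0 ->
  closed S ->
  (maximal_S_free S C <->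
   maximal_S_free_in (perp (lineality C))
     (closure (orth_proj (perp (lineality C)) @` S))
     (C `&` perp (lineality C))).
Proof.
move=> _ coneC _ [x0 intCx0] _.
have C0 : C 0.
  by have := coneC x0 0 (nbhs_singleton intCx0) (lexx 0); rewrite scale0r.
split; first exact: maximal_S_free_perp_lineality.
exact: maximal_S_free_of_perp_lineality.
Qed.
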